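(* Let $G=(V,E)$ be a finite simple connected graph of order $n\geq 2$. Then $\alpha_0(S(G))=n=\beta_0(S(G))$ if and only if $|N(S)|\geq |S|$ for every independent set $S$ of $G$.
   Context: For a finite simple graph $G=(V,E)$, the splitting graph $S(G)$ is obtained from $G$ by adding, for each vertex $v\in V$, a new vertex $v'$, and joining $v'$ to a vertex $u\in V$ if and only if $uv\in E$ (the new vertices are pairwise non-adjacent; the edges of $G$ are kept). For a graph $H$, $\alpha_0(H)$ denotes the vertex cover number (minimum size of a set of vertices meeting every edge) and $\beta_0(H)$ the independence number (maximum size of an independent set). For $S\subseteq V$, $N(S)$ is the set of vertices of $G$ adjacent to some vertex of $S$. *)

From mathcomp Require Import all_boot.
Set Implicit Arguments. Unset Strict Implicit. Unset Printing Implicit Defensive.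

Definition simple_graph (T : finType) (e : rel T) : Prop :=
  symmetric e /\ irreflexive e.

Definition connected_graph (T : finType) (e : rel T) : Prop :=
  forall x y : T, connect e x y.

(* splitting graph S(G): vertices inl v (original) and inr v (= v');
   edges of G kept, v' ~ u iff uv in E, primed vertices pairwise non-adjacent *)
Definition split_rel (T : finType) (e : rel T) : rel (T + T) :=
  fun a b =>
    match a, b with
    | inl u, inl v => e u v
    | inl u, inr v => e u v
    | inr u, inl v => e u v
    | inr _, inr _ => false
    end.

Definition is_vertex_cover (U : finType) (h : rel U) (C : {set U}) : bool :=
  [forall x, forall y, h x y ==> (x \in C) || (y \in C)].

Definition is_independent (U : finType) (h : rel U) (S : {set U}) : bool :=
  [forall x in S, forall y in S, ~~ h x y].

(* alpha_0: minimum size of a vertex cover (setT is always a cover) *)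
Definition vertex_cover_number (U : finType) (h : rel U) : nat :=
  \big[minn/#|U|]_(C : {set U} | is_vertex_cover h C) #|C|.

Definition independence_number (U : finType) (h : rel U) : nat :=
  \max_(S : {set U} | is_independent h S) #|S|.

Definition nbhd (T : finType) (e : rel T) (S : {set T}) : {set T} :=
  [set y | [exists x in S, e x y]].

From mathcomp Require Import all_boot all_order zify.
Import Order.TTheory.

Set Implicit Arguments.
Unset Strict Implicit.
Unset Printing Implicit Defensive.

(* Complements of vertex covers are exactly the independent sets, so
   alpha_0 + beta_0 = |V(S(G))| = 2n and both equalities amount to
   beta_0(S(G)) = n.  An independent set of S(G) consists of an independent
   set S of G together with copies v' of vertices outside N(S), and every such
   S extends to the independent set S + (V \ N(S))' of size |S| + n - |N(S)|.
   Hence beta_0(S(G)) = n + max_S (|S| - |N(S)|), which is n exactly under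
   Hall's condition |S| <= |N(S)| (S = {} giving the lower bound n). *)

Lemma cards_sum (T1 T2 : finType) (I : {set T1 + T2}) :
  #|I| = #|inl @^-1: I| + #|inr @^-1: I|.
Proof.
rewrite -!sum1_card big_mkcond big_sumType /=.
by congr (_ + _); rewrite [in RHS]big_mkcond; apply: eq_bigr => i _; rewrite inE.
Qed.

Section CoverIndependence.
Variables (U : finType) (h : rel U).

Lemma vertex_coverC (C : {set U}) :
  is_vertex_cover h C = is_independent h (~: C).
Proof.
apply: eq_forallb => x; rewrite inE; case: (x \in C) => /=.
  by apply/forallP => y; rewrite implybT.
by apply: eq_forallb => y; rewrite inE; case: (h x y); case: (y \in C).
Qed.

Lemma vertex_cover_number_le (C : {set U}) :
  is_vertex_cover h C -> vertex_cover_number h <= #|C|.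
Proof. exact: (@bigmin_le_cond _ nat). Qed.

Lemma vertex_cover_number_add_independence_number :
  vertex_cover_number h + independence_number h = #|U|.
Proof.
have le_beta : independence_number h <= #|U| - vertex_cover_number h.
  apply/bigmax_leqP => S indS.
  have : vertex_cover_number h <= #|~: S|.
    by apply: vertex_cover_number_le; rewrite vertex_coverC setCK.
  by rewrite cardsCs setCK; have := max_card S; lia.
have ge_alpha : #|U| - independence_number h <= vertex_cover_number h.
  apply/(@bigmin_geP _ nat); split=> [|C]; first exact: leq_subr.
  rewrite vertex_coverC leEnat leq_subCl => indC.
  by rewrite -[C]setCK -cardsCs; exact: leq_bigmax_cond.
have : vertex_cover_number h <= #|U| by exact: (@bigmin_le_id _ nat).
lia.
Qed.

End CoverIndependence.

Section SplittingGraph.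
Variables (T : finType) (e : rel T).
Hypothesis e_sym : symmetric e.

Definition split_lift (S : {set T}) : {set T + T} :=
  [set a | match a with inl x => x \in S | inr y => y \notin nbhd e S end].

Lemma card_split_lift (S : {set T}) :
  #|split_lift S| = #|S| + #|~: nbhd e S|.
Proof.
by rewrite cards_sum; congr (_ + _); apply: eq_card => x; rewrite !inE.
Qed.

Lemma split_lift_independent (S : {set T}) :
  is_independent e S -> is_independent (split_rel e) (split_lift S).
Proof.
move/forall_inP=> indS; apply/forall_inP => a; rewrite inE => Sa.
apply/forall_inP => b; rewrite inE.
case: a Sa => x Sx; case: b => y Sy //=.
- exact: (forall_inP (indS x Sx)).
- by apply: contra Sy => exy; rewrite inE; apply/existsP; exists x; rewrite Sx.
- by apply: contra Sx => exy; rewrite inE; apply/existsP; exists y; rewrite Sy e_sym.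
Qed.

Lemma split_independent_inl (I : {set T + T}) :
  is_independent (split_rel e) I -> is_independent e (inl @^-1: I).
Proof.
move/forall_inP=> indI; apply/forall_inP => x; rewrite inE => Ix.
by apply/forall_inP => y; rewrite inE => Iy; exact: (forall_inP (indI _ Ix) (inl y)).
Qed.

Lemma split_independent_sub_lift (I : {set T + T}) :
  is_independent (split_rel e) I -> I \subset split_lift (inl @^-1: I).
Proof.
move/forall_inP=> indI; apply/subsetP => -[x|y] Ia; rewrite !inE //.
apply/existsP => -[x /andP[]]; rewrite inE => Ix exy.
by have := forall_inP (indI _ Ix) _ Ia; rewrite /= exy.
Qed.

Lemma independence_number_split_ge : #|T| <= independence_number (split_rel e).
Proof.
have nbhd0 : nbhd e set0 = set0.
  by apply/setP => y; rewrite !inE; apply/negbTE/existsP => -[x]; rewrite inE.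
have ind0 : is_independent e set0 by apply/forall_inP => x; rewrite inE.
have := leq_bigmax_cond (F := fun I : {set T + T} => #|I|) _ (split_lift_independent ind0).
by rewrite card_split_lift cards0 nbhd0 setC0 cardsT.
Qed.

Lemma independence_number_split_le :
  independence_number (split_rel e) <= #|T| <->
  (forall S : {set T}, is_independent e S -> #|S| <= #|nbhd e S|).
Proof.
have lift_le S : (#|split_lift S| <= #|T|) = (#|S| <= #|nbhd e S|).
  by rewrite card_split_lift; have := cardsC (nbhd e S); lia.
split=> [le_beta S indS | hall].
  rewrite -lift_le; apply: leq_trans le_beta.
  exact: leq_bigmax_cond _ (split_lift_independent indS).
apply/bigmax_leqP => I indI.
rewrite (leq_trans (subset_leq_card (split_independent_sub_lift indI))) // lift_le.
exact/hall/split_independent_inl.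
Qed.

End SplittingGraph.

Theorem corollary2 (T : finType) (e : rel T) :
  simple_graph e -> connected_graph e -> 2 <= #|T| ->
  ((vertex_cover_number (split_rel e) = #|T| /\
    independence_number (split_rel e) = #|T|) <->
   (forall S : {set T}, is_independent e S -> #|S| <= #|nbhd e S|)).
Proof.
move=> [e_sym _] _ _.
rewrite -(independence_number_split_le e_sym).
have := vertex_cover_number_add_independence_number (split_rel e).
have := independence_number_split_ge e_sym.
rewrite card_sum; lia.
Qed.
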